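(* Let $W=\tfrac12(\Xi_+-\Xi_-)$ be the half interface width of a traveling wave with speed $\Omega\neq0$, so that $W$ satisfies the traveling-wave interface condition $$\frac{2(1-\kappa)^2}{\tau|\Omega|\delta}+\frac{1-\kappa}{\tau|\Omega|}\,2W=\exp\Big(\frac{1-\kappa}{\kappa\,\tau|\Omega|}\,2W\Big)-1 ,$$ and consider the spectral equation characterizing eigenvalues $\lambda$ with $\mathrm{Re}(\tau\lambda)>-1$, $$1-\exp\Big(-\frac{\kappa\tau\lambda+\kappa-1}{\kappa\,\tau|\Omega|}\,2W\Big)=\frac{(\kappa\tau\lambda+\kappa)(\kappa\tau\lambda+\kappa-1)(\kappa\tau\lambda+\kappa-1+2W)}{\kappa\,\tau|\Omega|}.$$ Using the interface condition together with the rescaling $$\mu=\frac{\tau\lambda}{\varepsilon},\qquad \varepsilon=\frac{\tau|\Omega|}{2W},$$ this spectral equation can be written as $$\exp(+\mu)=-\frac{\kappa}{\delta}\,\frac{2(1-\kappa)^2+(1-\kappa)\,\delta\,2W+\tau|\Omega|\delta}{(\kappa\varepsilon\mu+\kappa)(\kappa\varepsilon\mu+\kappa-1)(\kappa\varepsilon\mu+\kappa-1+2W)-\kappa\,\tau|\Omega|}.$$ Moreover, the right hand side converges for $\tau\to0$ and pointwise in $\mu$ to $-2/\delta$.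
   Context: Mean-field model $\tau\,\partial_t x(t,p)=\sigma(t)+\delta(p-\tfrac12)-H'(x(t,p))$, $p\in[0,1]$, with constraint $\int_0^1 x(t,p)\,dp=\ell(t)$, disorder strength $\delta>0$, relaxation time $\tau>0$, and trilinear $H'(x)=x+1$ for $x\le-\kappa$, $H'(x)=-\frac{1-\kappa}{\kappa}x$ for $|x|\le\kappa$, $H'(x)=x-1$ for $x\ge\kappa$, with $0<\kappa<1$. Traveling waves $x(t,p)=X(p-\Omega t)$ have interface positions $\Xi_-<\Xi_+$ (where the profile crosses $-\kappa$ and $+\kappa$) and exist when the interface condition above holds; this gives $W$ of order $\tau\ln(1/\tau)$ and hence $\varepsilon$ of order $1/\ln(1/\tau)$ as $\tau\to0$. Linearizing around the wave in the comoving frame gives the eigenvalue problem $\tau\lambda Z(P)=\tau\Omega Z'(P)-Z(P)+\kappa^{-1}\Psi(P)Z(P)-\kappa^{-1}\int\Psi(Q)Z(Q)\,dQ$ with $\Psi$ the indicator of $|P|<W$; its eigenvalues with $\mathrm{Re}(\tau\lambda)>-1$ are exactly the solutions of the spectral equation above with $\tau\lambda\neq(1-\kappa)/\kappa$. *)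

From Stdlib Require Import Reals.
From Coquelicot Require Import Coquelicot.
Open Scope R_scope.

Definition Cexp (z : C) : C :=
  (exp (Re z) * cos (Im z), exp (Re z) * sin (Im z)).

Definition interface_condition (kappa delta tau Omega W : R) : Prop :=
  2 * (1 - kappa) ^ 2 / (tau * Rabs Omega * delta)
  + (1 - kappa) / (tau * Rabs Omega) * (2 * W)
  = exp ((1 - kappa) / (kappa * tau * Rabs Omega) * (2 * W)) - 1.

Definition spectral_equation (kappa tau Omega W : R) (lambda : C) : Prop :=
  let tl : C := (RtoC tau * lambda)%C in
  (RtoC 1 - Cexp (- ((RtoC kappa * tl + RtoC kappa - RtoC 1)
                      / RtoC (kappa * tau * Rabs Omega)) * RtoC (2 * W)))%C
  = ((RtoC kappa * tl + RtoC kappa)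
     * (RtoC kappa * tl + RtoC kappa - RtoC 1)
     * (RtoC kappa * tl + RtoC kappa - RtoC 1 + RtoC (2 * W))
     / RtoC (kappa * tau * Rabs Omega))%C.

Definition eps_resc (tau Omega W : R) : R := tau * Rabs Omega / (2 * W).

Definition rescaled_rhs (kappa delta tau Omega W : R) (mu : C) : C :=
  let e : C := RtoC (eps_resc tau Omega W) in
  (- (RtoC (kappa / delta))
   * RtoC (2 * (1 - kappa) ^ 2 + (1 - kappa) * delta * (2 * W)
           + tau * Rabs Omega * delta)
   / ((RtoC kappa * e * mu + RtoC kappa)
      * (RtoC kappa * e * mu + RtoC kappa - RtoC 1)
      * (RtoC kappa * e * mu + RtoC kappa - RtoC 1 + RtoC (2 * W))
      - RtoC (kappa * tau * Rabs Omega)))%C.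

(* With a = tau |Omega|, eps = a / (2 W) and r = (1 - kappa) / (kappa eps), the exponent of
   the spectral equation is r - mu, and the interface condition says exactly
   a exp r = 2 (1 - kappa)^2 / delta + (1 - kappa) 2 W + a.  Substituting exp r clears the
   exponential of r from the spectral equation, which then becomes the rescaled one after
   multiplying through by exp mu.
   For the limit, the interface condition forces eps -> 0 as tau -> 0 (a exp r stays above
   2 (1 - kappa)^2 / delta, so r must blow up), and exp r >= 1 + r + r^2 / 2 gives
   W <= 2 kappa^2 eps / delta, so W -> 0 as well; the right hand side is a rational function
   of (eps, W, tau) whose value at 0 is -2/delta. *)
From Stdlib Require Import Reals Lra.
From Coquelicot Require Import Coquelicot.
Open Scope R_scope.

Lemma Cexp_add (z w : C) : Cexp (z + w) = (Cexp z * Cexp w)%C.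
Proof.
  destruct z as [x y], w as [x' y']; unfold Cexp; simpl.
  rewrite exp_plus, cos_plus, sin_plus.
  apply injective_projections; simpl; ring.
Qed.

Lemma Cexp_RtoC (r : R) : Cexp (RtoC r) = RtoC (exp r).
Proof.
  unfold Cexp; simpl; rewrite cos_0, sin_0.
  apply injective_projections; simpl; ring.
Qed.

Lemma Cexp_opp_mul (z : C) : (Cexp (- z) * Cexp z)%C = 1%C.
Proof.
  rewrite <- Cexp_add; replace (- z + z)%C with (RtoC 0) by ring.
  now rewrite Cexp_RtoC, exp_0.
Qed.

Lemma Cexp_neq0 (z : C) : Cexp z <> 0%C.
Proof.
  intros Hz; apply C1_nz.
  now rewrite <- (Cexp_opp_mul z), Hz, Cmult_0_r.
Qed.

Lemma Cexp_opp (z : C) : Cexp (- z) = (/ Cexp z)%C.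
Proof.
  rewrite <- (Cmult_1_l (/ Cexp z)), <- (Cexp_opp_mul z).
  field; apply Cexp_neq0.
Qed.

Lemma Cexp_RtoC_sub (r : R) (z : C) : Cexp (RtoC r - z) = (RtoC (exp r) / Cexp z)%C.
Proof. unfold Cminus; now rewrite Cexp_add, Cexp_RtoC, Cexp_opp. Qed.

Lemma RtoC_neq0 (x : R) : x <> 0 -> RtoC x <> 0%C.
Proof. intros Hx H; apply Hx, RtoC_inj, H. Qed.

Lemma Cinv_0 : Cinv 0 = 0%C.
Proof.
  unfold Cinv, Rdiv; simpl.
  replace (0 * (0 * 1) + 0 * (0 * 1)) with 0 by ring.
  rewrite Rinv_0; apply injective_projections; simpl; ring.
Qed.

Lemma one_add_div_eq_div_iff (u m p q : C) :
  u <> 0%C -> m <> 0%C -> q <> 0%C ->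
  ((1 + m / q / u = p / q)%C <-> u = (m / (p - q))%C).
Proof.
  intros Hu Hm Hq.
  assert (Hcleared : (1 + m / q / u = p / q)%C <-> (u * (p - q) = m)%C).
  { split; intros H.
    - apply (f_equal (fun v => v * q * u)%C) in H; field_simplify in H; auto.
      replace (u * (p - q))%C with (u * p - q * u)%C by ring.
      rewrite <- H; ring.
    - rewrite <- H; field; auto. }
  rewrite Hcleared.
  destruct (Ceq_dec (p - q) 0) as [Hpq|Hpq].
  (* both sides fail: the left one forces m = 0, the right one reads u = m / 0 = 0 *)
  - rewrite Hpq, Cmult_0_r; unfold Cdiv; rewrite Cinv_0, Cmult_0_r.
    split; intros H; [now exfalso; apply Hm|contradiction].
  - split; intros H; [rewrite <- H; field; auto|rewrite H; field; auto].
Qed.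

Lemma interface_condition_exp (kappa delta tau Omega W : R) :
  0 < delta -> 0 < tau -> Omega <> 0 ->
  interface_condition kappa delta tau Omega W ->
  exp ((1 - kappa) / (kappa * tau * Rabs Omega) * (2 * W)) * (tau * Rabs Omega)
  = 2 * (1 - kappa) ^ 2 / delta + (1 - kappa) * (2 * W) + tau * Rabs Omega.
Proof.
  intros hd ht hO Hic.
  assert (ho : 0 < Rabs Omega) by now apply Rabs_pos_lt.
  unfold interface_condition in Hic.
  match type of Hic with _ = exp ?x - 1 => replace (exp x) with (exp x - 1 + 1) by ring end.
  rewrite <- Hic; field; lra.
Qed.

Lemma spectral_equation_rescaled (kappa delta tau Omega W : R) (lambda : C) :
  0 < kappa < 1 -> 0 < delta -> 0 < tau -> Omega <> 0 -> 0 < W ->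
  interface_condition kappa delta tau Omega W ->
  let mu : C := (RtoC tau * lambda / RtoC (eps_resc tau Omega W))%C in
  spectral_equation kappa tau Omega W lambda
  <-> Cexp mu = rescaled_rhs kappa delta tau Omega W mu.
Proof.
  intros hk hd ht hO hW Hic mu.
  assert (ho : 0 < Rabs Omega) by now apply Rabs_pos_lt.
  assert (Hexponent :
    (- ((RtoC kappa * (RtoC tau * lambda) + RtoC kappa - RtoC 1)
        / RtoC (kappa * tau * Rabs Omega)) * RtoC (2 * W))%C
    = (RtoC ((1 - kappa) / (kappa * tau * Rabs Omega) * (2 * W)) - mu)%C).
  { unfold mu, eps_resc.
    rewrite !RtoC_mult, !RtoC_div, !RtoC_minus, !RtoC_mult
      by (apply Rgt_not_eq; repeat apply Rmult_lt_0_compat; lra).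
    field; repeat split; apply RtoC_neq0; lra. }
  assert (Hkappa_tl : (RtoC kappa * (RtoC tau * lambda))%C
                      = (RtoC kappa * RtoC (eps_resc tau Omega W) * mu)%C).
  { unfold mu; field; apply RtoC_neq0; unfold eps_resc.
    apply Rgt_not_eq, Rdiv_lt_0_compat; nra. }
  unfold spectral_equation, rescaled_rhs; cbv zeta.
  rewrite Hexponent, Cexp_RtoC_sub, Hkappa_tl.
  set (r := (1 - kappa) / (kappa * tau * Rabs Omega) * (2 * W)).
  set (q := RtoC (kappa * tau * Rabs Omega)).
  set (m := (- RtoC (kappa / delta) * RtoC (2 * (1 - kappa) ^ 2
              + (1 - kappa) * delta * (2 * W) + tau * Rabs Omega * delta))%C).
  assert (Hq : q <> 0%C) by (apply RtoC_neq0, Rgt_not_eq, Rmult_lt_0_compat; nra).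
  assert (Hm : (- (RtoC (exp r) * q))%C = m).
  { unfold q, m; rewrite <- RtoC_opp, <- !RtoC_mult, <- RtoC_opp; f_equal.
    replace (- (exp r * (kappa * tau * Rabs Omega)))
      with (- kappa * (exp r * (tau * Rabs Omega))) by ring.
    unfold r; rewrite (interface_condition_exp kappa delta) by assumption.
    field; lra. }
  replace (1 - RtoC (exp r) / Cexp mu)%C with (1 + m / q / Cexp mu)%C
    by (rewrite <- Hm; field; split; [apply Cexp_neq0|exact Hq]).
  apply one_add_div_eq_div_iff; [apply Cexp_neq0| |exact Hq].
  intros Hm0; apply (Cmult_neq_0 (RtoC (exp r)) q);
    [apply RtoC_neq0, Rgt_not_eq, exp_pos|exact Hq|].
  replace (RtoC (exp r) * q)%C with (- m)%C by (rewrite <- Hm; ring).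
  rewrite Hm0; ring.
Qed.

Lemma exp_ge_quadratic (r : R) : 0 <= r -> 1 + r + r ^ 2 / 2 <= exp r.
Proof. intros Hr; pose proof (exp_ge_taylor r 2 Hr) as H; simpl in H; lra. Qed.

Lemma exp_le_compat (x y : R) : x <= y -> exp x <= exp y.
Proof. intros [H|H]; [now apply Rlt_le, exp_increasing|subst; lra]. Qed.

Lemma eps_resc_pos (tau Omega W : R) :
  0 < tau -> Omega <> 0 -> 0 < W -> 0 < eps_resc tau Omega W.
Proof.
  intros ht hO hW; assert (0 < Rabs Omega) by now apply Rabs_pos_lt.
  unfold eps_resc; apply Rdiv_lt_0_compat; nra.
Qed.

Lemma eps_resc_0 (Omega W : R) : eps_resc 0 Omega W = 0.
Proof. unfold eps_resc, Rdiv; ring. Qed.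

Lemma interface_exponent_eps_resc (kappa tau Omega W : R) :
  0 < kappa -> 0 < tau -> Omega <> 0 -> 0 < W ->
  (1 - kappa) / (kappa * tau * Rabs Omega) * (2 * W)
  = (1 - kappa) / (kappa * eps_resc tau Omega W).
Proof.
  intros hk ht hO hW; assert (0 < Rabs Omega) by now apply Rabs_pos_lt.
  unfold eps_resc; field; repeat split; lra.
Qed.

Lemma eps_resc_lt (kappa delta tau Omega W e : R) :
  0 < kappa < 1 -> 0 < delta -> 0 < tau -> Omega <> 0 -> 0 < W -> 0 < e ->
  interface_condition kappa delta tau Omega W ->
  tau * Rabs Omega * exp ((1 - kappa) / (kappa * e)) < 2 * (1 - kappa) ^ 2 / delta ->
  eps_resc tau Omega W < e.
Proof.
  intros hk hd ht hO hW he Hic Hsmall.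
  assert (ho : 0 < Rabs Omega) by now apply Rabs_pos_lt.
  pose proof (interface_condition_exp kappa delta tau Omega W hd ht hO Hic) as Hexp.
  rewrite interface_exponent_eps_resc in Hexp by lra.
  pose proof (eps_resc_pos tau Omega W ht hO hW) as Hpos.
  destruct (Rlt_or_le (eps_resc tau Omega W) e) as [Hlt|Hge]; [exact Hlt|exfalso].
  set (a := tau * Rabs Omega) in *.
  set (A := 2 * (1 - kappa) ^ 2 / delta) in *.
  set (X := exp ((1 - kappa) / (kappa * eps_resc tau Omega W))) in *.
  set (Y := exp ((1 - kappa) / (kappa * e))) in *.
  assert (Ha : 0 < a) by (unfold a; nra).
  assert (Hmono : a * X <= a * Y).
  { apply Rmult_le_compat_l; [lra|].
    apply exp_le_compat; unfold Rdiv; apply Rmult_le_compat_l; [lra|].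
    apply Rinv_le_contravar; nra. }
  assert (0 < (1 - kappa) * (2 * W)) by nra.
  lra.
Qed.

Lemma width_le_eps_resc (kappa delta tau Omega W : R) :
  0 < kappa < 1 -> 0 < delta -> 0 < tau -> Omega <> 0 -> 0 < W ->
  interface_condition kappa delta tau Omega W ->
  W <= 2 * kappa ^ 2 / delta * eps_resc tau Omega W.
Proof.
  intros hk hd ht hO hW Hic.
  assert (ho : 0 < Rabs Omega) by now apply Rabs_pos_lt.
  pose proof (interface_condition_exp kappa delta tau Omega W hd ht hO Hic) as Hexp.
  set (a := tau * Rabs Omega) in Hexp.
  set (r := (1 - kappa) / (kappa * tau * Rabs Omega) * (2 * W)) in Hexp.
  assert (Ha : 0 < a) by (unfold a; nra).
  assert (Hka : 0 < kappa * tau * Rabs Omega) by (repeat apply Rmult_lt_0_compat; lra).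
  assert (Hr : 0 < r) by (unfold r; apply Rmult_lt_0_compat; [apply Rdiv_lt_0_compat|]; lra).
  assert (HW : W = kappa * a * r / (2 * (1 - kappa))) by (unfold r, a; field; repeat split; lra).
  assert (He : eps_resc tau Omega W = (1 - kappa) / (kappa * r)).
  { unfold r; rewrite interface_exponent_eps_resc by lra.
    pose proof (eps_resc_pos tau Omega W ht hO hW); field; split; lra. }
  assert (Har : a * r ^ 2 <= 4 * (1 - kappa) ^ 2 / delta).
  { pose proof (exp_ge_quadratic r (Rlt_le _ _ Hr)) as Hq.
    apply (Rmult_le_compat_l a) in Hq; [|lra].
    replace ((1 - kappa) * (2 * W)) with (kappa * (a * r)) in Hexp by (rewrite HW; field; lra).
    assert (0 <= (1 - kappa) * (a * r)) by (apply Rmult_le_pos; nra).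
    lra. }
  rewrite He, HW.
  assert (Hdiff : 2 * kappa ^ 2 / delta * ((1 - kappa) / (kappa * r))
                  - kappa * a * r / (2 * (1 - kappa))
                  = kappa / (2 * (1 - kappa) * r) * (4 * (1 - kappa) ^ 2 / delta - a * r ^ 2))
    by (field; repeat split; lra).
  assert (0 <= kappa / (2 * (1 - kappa) * r) * (4 * (1 - kappa) ^ 2 / delta - a * r ^ 2)).
  { apply Rmult_le_pos; [|lra]. apply Rlt_le, Rdiv_lt_0_compat; nra. }
  lra.
Qed.

(* The canonical uniform structure on C is the product one, while multiplication is
   continuous for the one induced by Cmod; both have the same neighbourhoods. *)
Lemma filterlim_C_AbsRing {T : Type} (F : (T -> Prop) -> Prop) (f : T -> C) (x : C) :
  filterlim f F (@locally C_UniformSpace x)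
  <-> filterlim f F (@locally (AbsRing_UniformSpace C_AbsRing) x).
Proof. split; intros H P HP; apply H, locally_C, HP. Qed.

Section Limits.
Context {T : Type} {F : (T -> Prop) -> Prop} {FF : Filter F}.

Lemma filterlim_Rplus (f g : T -> R) (x y : R) :
  filterlim f F (locally x) -> filterlim g F (locally y) ->
  filterlim (fun t => f t + g t) F (locally (x + y)).
Proof.
  intros Hf Hg.
  exact (filterlim_comp_2 _ _ _ Hf Hg (@filterlim_plus R_AbsRing R_NormedModule x y)).
Qed.

Lemma filterlim_Rmult (f g : T -> R) (x y : R) :
  filterlim f F (locally x) -> filterlim g F (locally y) ->
  filterlim (fun t => f t * g t) F (locally (x * y)).
Proof.
  intros Hf Hg; exact (filterlim_comp_2 _ _ _ Hf Hg (@filterlim_mult R_AbsRing x y)).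
Qed.

Lemma filterlim_0_iff_eventually_lt (f : T -> R) :
  F (fun t => 0 <= f t) ->
  filterlim f F (locally 0) <-> (forall e, 0 < e -> F (fun t => f t < e)).
Proof.
  intros Hnn; rewrite filterlim_locally; split; intros H.
  - intros e he; apply (filter_imp _ _) with (2 := H (mkposreal e he)); intros t Ht.
    change (Rabs (f t - 0) < e) in Ht; apply Rabs_def2 in Ht; lra.
  - intros e; apply (filter_imp _ _) with (2 := filter_and _ _ Hnn (H e (cond_pos e))).
    intros t [H0 H1]; change (Rabs (f t - 0) < e).
    rewrite Rminus_0_r, Rabs_pos_eq; assumption.
Qed.

Lemma filterlim_RtoC (f : T -> R) (x : R) :
  filterlim f F (locally x) -> filterlim (fun t => RtoC (f t)) F (locally (RtoC x)).
Proof.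
  intros Hf; apply filterlim_locally; intros eps.
  apply (filterlim_locally f x) with (eps := eps) in Hf.
  apply (filter_imp _ _ (fun t Ht => conj Ht (ball_center 0 eps)) Hf).
Qed.

Lemma filterlim_Cplus (f g : T -> C) (x y : C) :
  filterlim f F (locally x) -> filterlim g F (locally y) ->
  filterlim (fun t => (f t + g t)%C) F (locally (x + y)%C).
Proof.
  intros Hf Hg.
  exact (filterlim_comp_2 _ _ _ Hf Hg (@filterlim_plus C_AbsRing C_NormedModule x y)).
Qed.

Lemma filterlim_Cminus (f g : T -> C) (x y : C) :
  filterlim f F (locally x) -> filterlim g F (locally y) ->
  filterlim (fun t => (f t - g t)%C) F (locally (x - y)%C).
Proof.
  intros Hf Hg; apply filterlim_Cplus; [exact Hf|].
  eapply filterlim_comp; [exact Hg|exact (@filterlim_opp C_AbsRing C_NormedModule y)].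
Qed.

Lemma filterlim_Cmult (f g : T -> C) (x y : C) :
  filterlim f F (locally x) -> filterlim g F (locally y) ->
  filterlim (fun t => (f t * g t)%C) F (locally (x * y)%C).
Proof.
  rewrite !filterlim_C_AbsRing; intros Hf Hg.
  exact (filterlim_comp_2 _ _ _ Hf Hg (@filterlim_mult C_AbsRing x y)).
Qed.

Lemma filterlim_Cinv (f : T -> C) (x : C) :
  x <> 0%C -> filterlim f F (locally x) -> filterlim (fun t => (/ f t)%C) F (locally (/ x)%C).
Proof.
  intros Hx Hf; apply filterlim_C_AbsRing; apply filterlim_C_AbsRing in Hf.
  set (m := Cmod x).
  assert (Hm : 0 < m) by now apply Cmod_gt_0.
  apply (proj2 (@filterlim_locally T (AbsRing_UniformSpace C_AbsRing) F FF _ _)).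
  intros eps; pose proof (cond_pos eps) as Heps.
  assert (Hd : 0 < Rmin (m / 2) (eps * m * m / 2)).
  { apply Rmin_glb_lt; [lra|].
    apply Rmult_lt_0_compat; [|lra]; repeat apply Rmult_lt_0_compat; lra. }
  apply (proj1 (@filterlim_locally T (AbsRing_UniformSpace C_AbsRing) F FF _ _))
    with (eps := mkposreal _ Hd) in Hf.
  apply (filter_imp _ _) with (2 := Hf); intros t Ht.
  change (Cmod (f t - x) < Rmin (m / 2) (eps * m * m / 2)) in Ht.
  change (Cmod (/ f t - / x) < eps).
  set (u := f t) in Ht |- *.
  assert (Hxu : Cmod (x - u) = Cmod (u - x)).
  { replace (x - u)%C with (- (u - x))%C by ring; apply Cmod_opp. }
  assert (Hu : m / 2 < Cmod u).
  { pose proof (Cmod_triangle u (x - u)) as Htri.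
    replace (u + (x - u))%C with x in Htri by ring; fold m in Htri.
    pose proof (Rmin_l (m / 2) (eps * m * m / 2)); lra. }
  assert (Hu0 : u <> 0%C) by (apply Cmod_gt_0; lra).
  replace (/ u - / x)%C with ((x - u) / (u * x))%C by (field; tauto).
  rewrite Cmod_div, Cmod_mult, Hxu by (now apply Cmult_neq_0); fold m.
  apply Rlt_div_l; [nra|].
  pose proof (Rmin_r (m / 2) (eps * m * m / 2)); nra.
Qed.

Lemma rescaled_denominator_at_0 (kappa Omega : R) (mu : C) :
  ((RtoC kappa * RtoC 0 * mu + RtoC kappa) * (RtoC kappa * RtoC 0 * mu + RtoC kappa - RtoC 1)
   * (RtoC kappa * RtoC 0 * mu + RtoC kappa - RtoC 1 + RtoC (2 * 0))
   - RtoC (kappa * 0 * Rabs Omega))%C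
  = RtoC (kappa * (1 - kappa) ^ 2).
Proof.
  replace (RtoC kappa * RtoC 0 * mu)%C with (RtoC 0) by ring.
  repeat first [rewrite <- RtoC_plus | rewrite <- RtoC_minus | rewrite <- RtoC_mult].
  f_equal; ring.
Qed.

Lemma filterlim_rescaled_rhs (kappa delta Omega : R) (tau W : T -> R) (mu : C) :
  0 < kappa < 1 -> 0 < delta ->
  filterlim tau F (locally 0) -> filterlim W F (locally 0) ->
  filterlim (fun t => eps_resc (tau t) Omega (W t)) F (locally 0) ->
  filterlim (fun t => rescaled_rhs kappa delta (tau t) Omega (W t) mu)
    F (locally (RtoC (- 2 / delta))).
Proof.
  intros hk hd Htau HW Heps.
  assert (Hden : 0 < kappa * (1 - kappa) ^ 2)
    by (apply Rmult_lt_0_compat; [|apply pow_lt]; lra).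
  assert (Hval : rescaled_rhs kappa delta 0 Omega 0 mu = RtoC (- 2 / delta)).
  { unfold rescaled_rhs; cbv zeta.
    rewrite eps_resc_0, rescaled_denominator_at_0, <- RtoC_opp, <- !RtoC_mult, <- RtoC_div.
    - f_equal; field; lra.
    - now apply Rgt_not_eq. }
  rewrite <- Hval; unfold rescaled_rhs, Cdiv; cbv zeta.
  rewrite eps_resc_0.
  repeat match goal with
  | |- filterlim (fun _ => ?c) _ (locally ?c) => apply filterlim_const
  | |- filterlim (fun _ => (_ - _)%C) _ _ => apply filterlim_Cminus
  | |- filterlim (fun _ => (_ + _)%C) _ _ => apply filterlim_Cplus
  | |- filterlim (fun _ => (_ * _)%C) _ _ => apply filterlim_Cmult
  | |- filterlim (fun _ => (/ _)%C) _ _ => apply filterlim_Cinv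
  | |- filterlim (fun _ => RtoC _) _ _ => apply filterlim_RtoC
  | |- filterlim (fun _ => _ + _) _ _ => apply filterlim_Rplus
  | |- filterlim (fun _ => _ * _) _ _ => apply filterlim_Rmult
  (* unification eta-contracts [fun t => c * t] into [Rmult c] *)
  | |- filterlim (Rmult ?c) ?G ?H => change (filterlim (fun t => c * t) G H)
  | H : filterlim _ _ _ |- _ => exact H
  end.
  rewrite rescaled_denominator_at_0; now apply RtoC_neq0, Rgt_not_eq.
Qed.

End Limits.

Lemma at_right_0_lt (m : R) : 0 < m -> at_right 0 (fun t => 0 < t /\ t < m).
Proof.
  intros Hm; exists (mkposreal m Hm); intros t Ht Hpos; split; [exact Hpos|].
  change (Rabs (t - 0) < m) in Ht; rewrite Rminus_0_r, Rabs_pos_eq in Ht; lra.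
Qed.

Section Asymptotics.
Variables (kappa delta Omega : R) (Wf : R -> R).
Hypotheses (hk : 0 < kappa < 1) (hd : 0 < delta) (hO : Omega <> 0).
Hypothesis HWf :
  forall tau, 0 < tau -> 0 < Wf tau /\ interface_condition kappa delta tau Omega (Wf tau).

Lemma at_right_0_pos : at_right 0 (fun tau => 0 < tau).
Proof. now exists (mkposreal 1 Rlt_0_1). Qed.

Lemma eps_resc_eventually_lt (e : R) :
  0 < e -> at_right 0 (fun tau => eps_resc tau Omega (Wf tau) < e).
Proof.
  intros he; assert (ho : 0 < Rabs Omega) by now apply Rabs_pos_lt.
  set (m := 2 * (1 - kappa) ^ 2 / delta / exp ((1 - kappa) / (kappa * e)) / Rabs Omega).
  assert (Hm : 0 < m).
  { unfold m; repeat apply Rdiv_lt_0_compat; try apply exp_pos; try lra.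
    apply Rmult_lt_0_compat; [lra|apply pow_lt; lra]. }
  apply (filter_imp _ _) with (2 := at_right_0_lt m Hm); intros tau [ht Htm].
  destruct (HWf tau ht) as [hW Hic].
  apply (eps_resc_lt kappa delta); try assumption.
  apply Rlt_div_r; [apply exp_pos|].
  apply Rlt_div_r; [lra|exact Htm].
Qed.

Lemma eps_resc_lim :
  filterlim (fun tau => eps_resc tau Omega (Wf tau)) (at_right 0) (locally 0).
Proof.
  apply filterlim_0_iff_eventually_lt; [|exact eps_resc_eventually_lt].
  apply (filter_imp _ _) with (2 := at_right_0_pos); intros tau ht.
  apply Rlt_le, eps_resc_pos; [exact ht|exact hO|apply HWf, ht].
Qed.

Lemma width_lim : filterlim Wf (at_right 0) (locally 0).
Proof.
  assert (Hc : 0 < 2 * kappa ^ 2 / delta) by (apply Rdiv_lt_0_compat; nra).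
  apply filterlim_0_iff_eventually_lt.
  { apply (filter_imp _ _) with (2 := at_right_0_pos); intros tau ht.
    apply Rlt_le, HWf, ht. }
  intros e he.
  assert (he' : 0 < e / (2 * kappa ^ 2 / delta)) by now apply Rdiv_lt_0_compat.
  apply (filter_imp _ _)
    with (2 := filter_and _ _ at_right_0_pos (eps_resc_eventually_lt _ he')).
  intros tau [ht Heps]; destruct (HWf tau ht) as [hW Hic].
  eapply Rle_lt_trans; [apply (width_le_eps_resc kappa delta tau Omega); assumption|].
  rewrite Rmult_comm; apply Rlt_div_r; assumption.
Qed.

End Asymptotics.

Theorem lemma2p3 (kappa delta Omega : R)
  (hk : 0 < kappa < 1) (hd : 0 < delta) (hO : Omega <> 0) :
  (forall tau W : R, 0 < tau -> 0 < W ->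
     interface_condition kappa delta tau Omega W ->
     forall lambda : C,
       let mu : C := (RtoC tau * lambda / RtoC (eps_resc tau Omega W))%C in
       spectral_equation kappa tau Omega W lambda
       <-> Cexp mu = rescaled_rhs kappa delta tau Omega W mu)
  /\
  (forall Wf : R -> R,
     (forall tau : R, 0 < tau ->
        0 < Wf tau /\ interface_condition kappa delta tau Omega (Wf tau)) ->
     forall mu : C,
       filterlim (fun tau => rescaled_rhs kappa delta tau Omega (Wf tau) mu)
         (at_right 0) (locally (RtoC (- 2 / delta)))).
Proof.
  split.
  - intros tau W ht hW Hic lambda; now apply spectral_equation_rescaled.
  - intros Wf HWf mu.
    apply (filterlim_rescaled_rhs kappa delta Omega (fun tau => tau) Wf mu hk hd).
    + apply filter_le_within.
    + now apply (width_lim kappa delta Omega).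
    + now apply (eps_resc_lim kappa delta Omega).
Qed.
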